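(* Let $\mathcal G=(\mathcal N,\mathcal E_Q)$ be an undirected connected graph on the player set $\mathcal N=[n]$, and let $(\mathcal N,\mathcal S,\mathcal A,\mathbb P,(r_i)_{i\in\mathcal N},\gamma)$ be an infinite-horizon $\gamma$-discounted Markov game with $n>2$ players. Then this Markov game is an NMG with respect to $\mathcal G$ if and only if both of the following hold: (1) for each $i\in\mathcal N$, $s\in\mathcal S$, $a_i\in\mathcal A_i$, the function $r_i(s,a_i,\cdot)$ (of $a_{-i}$) is decomposable with respect to $\mathcal E_{Q,i}$, i.e. there are non-negative functions $r_{i,j}(s,a_i,\cdot):\mathcal A_j\to\mathbb R_{\ge 0}$, $j\in\mathcal E_{Q,i}$, with $r_i(s,\mathbf a)=\sum_{j\in\mathcal E_{Q,i}}r_{i,j}(s,a_i,a_j)$ for all $\mathbf a\in\mathcal A$; (2) for each $s,s'\in\mathcal S$, the function $\mathbf a\mapsto\mathbb P(s'\mid s,\mathbf a)$ is decomposable with respect to $\mathcal N_C$, i.e. if $\mathcal N_C\neq\emptyset$ there are non-negative functions $\mathbb F_i(s'\mid s,\cdot):\mathcal A_i\to\mathbb R_{\ge0}$, $i\in\mathcal N_C$, with $\mathbb P(s'\mid s,\mathbf a)=\sum_{i\in\mathcal N_C}\mathbb F_i(s'\mid s,a_i)$ for all $\mathbf a$, and if $\mathcal N_C=\emptyset$ there is a non-negative constant $\mathbb F_o(s'\mid s)$ with $\mathbb P(s'\mid s,\mathbf a)=\mathbb F_o(s'\mid s)$ for all $\mathbf a$. Moreover, the Markov game is a zero-sum NMG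 with respect to $\mathcal G$ if and only if (1) and (2) hold and, in addition, for every $s\in\mathcal S$ the network game with payoff functions $(r_{i,j}(s,\cdot,\cdot))_{(i,j)\in\mathcal E_Q}$ from (1) is zero-sum, i.e. $\sum_{i\in\mathcal N}\sum_{j\in\mathcal E_{Q,i}}r_{i,j}(s,a_i,a_j)=0$ for all $\mathbf a\in\mathcal A$. Finally, when there are exactly two players, every Markov game is an NMG and every zero-sum Markov game is a zero-sum NMG.
   Context: An infinite-horizon $\gamma$-discounted Markov game $(\mathcal N,\mathcal S,\mathcal A,\mathbb P,(r_i)_{i\in\mathcal N},\gamma)$ has finite player set $\mathcal N=[n]$, finite state space $\mathcal S$, finite action sets $\mathcal A_i$ with $\mathcal A=\prod_{i}\mathcal A_i$, transition kernel $\mathbb P(\cdot\mid s,\mathbf a)\in\Delta(\mathcal S)$, rewards $r_i:\mathcal S\times\mathcal A\to[0,R]$, and $\gamma\in(0,1)$. For a graph $(\mathcal N,\mathcal E)$, $\mathcal E_i$ denotes the set of neighbors of $i$ (excluding $i$), and $\mathcal N_C$ denotes the set of nodes adjacent to every other node (possibly empty). The game is an NMG (Markov game with networked separable interactions) with respect to $\mathcal G=(\mathcal N,\mathcal E_Q)$ if for every function $V:\mathcal S\to\mathbb R$, setting $Q_i^V(s,\mathbf a):=r_i(s,\mathbf a)+\gamma\sum_{s'}\mathbb P(s'\mid s,\mathbf a)V(s')$, there exist functions $(Q^V_{i,j})_{(i,j)\in\mathcal E_Q}$ with $Q_i^V(s,\mathbf a)=\sum_{j\in\mathcal E_{Q,i}}Q^V_{i,j}(s,a_i,a_j)$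 for all $i,s,\mathbf a$. It is a zero-sum NMG if in addition, for every $s$, the functions $Q^{\mathbf 0}_{i,j}(s,\cdot,\cdot)$ (with $V\equiv0$) form a zero-sum network game, i.e. $\sum_i\sum_{j\in\mathcal E_{Q,i}}Q^{\mathbf0}_{i,j}(s,a_i,a_j)=0$ for all $\mathbf a$. A zero-sum Markov game means $\sum_i r_i(s,\mathbf a)=0$ for all $s,\mathbf a$. *)

From HB Require Import structures.
From mathcomp Require Import all_boot all_order all_algebra.
From mathcomp Require Import reals.
Set Implicit Arguments. Unset Strict Implicit. Unset Printing Implicit Defensive.
Import Order.TTheory GRing.Theory Num.Theory.
Local Open Scope ring_scope.

Section MarkovGames.
Variables (R : realType) (n : nat) (S : finType) (A : 'I_n -> finType).

Definition joint := forall i : 'I_n, A i.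

Definition is_markov_game (P : S -> joint -> S -> R) (r : 'I_n -> S -> joint -> R)
    (Rmax gamma : R) : Prop :=
  [/\ 0 < gamma < 1,
      (forall s a s', 0 <= P s a s'),
      (forall s a, \sum_(s' : S) P s a s' = 1) &
      (forall i s a, 0 <= r i s a <= Rmax)].

Definition zero_sum_mg (r : 'I_n -> S -> joint -> R) : Prop :=
  forall s a, \sum_(i < n) r i s a = 0.

Definition nbrs (e : rel 'I_n) (i : 'I_n) : {set 'I_n} :=
  [set j | (j != i) && e i j].

Definition NC (e : rel 'I_n) : {set 'I_n} :=
  [set i | [forall j, (j != i) ==> e i j]].

Definition QV (P : S -> joint -> S -> R) (r : 'I_n -> S -> joint -> R) (gamma : R)
    (V : S -> R) (i : 'I_n) (s : S) (a : joint) : R :=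
  r i s a + gamma * \sum_(s' : S) P s a s' * V s'.

Definition decomposes (e : rel 'I_n) (Q : 'I_n -> S -> joint -> R)
    (Qij : forall i j : 'I_n, S -> A i -> A j -> R) : Prop :=
  forall i s a, Q i s a = \sum_(j in nbrs e i) Qij i j s (a i) (a j).

Definition network_zero_sum (e : rel 'I_n)
    (Qij : forall i j : 'I_n, S -> A i -> A j -> R) : Prop :=
  forall s (a : joint),
    \sum_(i < n) \sum_(j in nbrs e i) Qij i j s (a i) (a j) = 0.

Definition is_NMG (e : rel 'I_n) P r gamma : Prop :=
  forall V : S -> R, exists Qij, decomposes e (QV P r gamma V) Qij.

Definition is_zero_sum_NMG (e : rel 'I_n) P r gamma : Prop :=
  is_NMG e P r gamma /\
  exists Qij, decomposes e (QV P r gamma (fun _ => 0)) Qij /\ network_zero_sum e Qij.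

Definition reward_decomp_witness (e : rel 'I_n) (r : 'I_n -> S -> joint -> R)
    (rij : forall i j : 'I_n, S -> A i -> A j -> R) : Prop :=
  (forall i j s ai aj, j \in nbrs e i -> 0 <= rij i j s ai aj) /\ decomposes e r rij.

Definition cond1 (e : rel 'I_n) r : Prop := exists rij, reward_decomp_witness e r rij.

Definition cond2 (e : rel 'I_n) (P : S -> joint -> S -> R) : Prop :=
  forall s s' : S,
    (NC e != set0 ->
      exists F : forall i : 'I_n, A i -> R,
        (forall i ai, i \in NC e -> 0 <= F i ai) /\
        (forall a : joint, P s a s' = \sum_(i in NC e) F i (a i))) /\
    (NC e = set0 ->
      exists c : R, 0 <= c /\ forall a : joint, P s a s' = c).

Definition cond1_zero_sum (e : rel 'I_n) r : Prop :=
  exists rij, reward_decomp_witness e r rij /\ network_zero_sum e rij.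

Definition simple_connected_graph (e : rel 'I_n) : Prop :=
  [/\ symmetric e, irreflexive e & forall i j, connect e i j].

End MarkovGames.

From HB Require Import structures.
From mathcomp Require Import all_boot all_order all_algebra.
From mathcomp Require Import reals boolp zify.
Import Order.TTheory GRing.Theory Num.Theory.
Local Open Scope ring_scope.

(* Taking V = 0 shows that the rewards decompose along the graph; lowering each summand
   r_ij(s, a_i, .) to its minimum and handing the removed amount to one fixed neighbour
   makes all summands non-negative.  Subtracting the Q-functions for V = 0 and V = 1_{s'}
   shows that f := P(s' | s, .) decomposes along the star of every node.  For three
   distinct nodes i, i1, i2, the change of f caused by a_i depends only on (a_i, a_i1) and
   only on (a_i, a_i2), hence on a_i alone, so f is a sum of functions of single actions;
   and a_k cannot matter for k outside N_C, since some node m is not adjacent to k and the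
   star decomposition at m ignores a_k.  Conversely, a function of a_k with k in N_C can be
   charged to the edge (i, k) of every i != k.  With two players the only edge carries the
   whole Q-function.  For the zero-sum part, non-negative rewards summing to zero along a
   decomposition must vanish. *)

Section Profiles.
Context {n : nat} {A : 'I_n -> finType}.
Implicit Types (a b : joint A).

Lemma dfwith_id a k : dfwith a (a k) = a.
Proof.
apply: functional_extensionality_dep => j.
by case: (eqVneq k j) => [<-|kj]; rewrite ?dfwith_in ?dfwith_out.
Qed.

Lemma dfwith_dfwith a k (x y : A k) : dfwith (dfwith a x) y = dfwith a y.
Proof.
apply: functional_extensionality_dep => j.
by case: (eqVneq k j) => [<-|kj]; rewrite ?dfwith_in ?dfwith_out.
Qed.

Lemma sum_nbrs_dfwith {R : nmodType} (g : forall j, A j -> R) (e : rel 'I_n) i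
    (x : A i) b :
  \sum_(j in nbrs e i) g j (dfwith b x j) = \sum_(j in nbrs e i) g j (b j).
Proof. by apply: eq_bigr => j; rewrite inE => /andP[ji _]; rewrite dfwith_out // eq_sym. Qed.

End Profiles.

Section Separable.
Context {R : zmodType} {n : nat} {A : 'I_n -> finType}.
Implicit Types (f : joint A -> R) (a b : joint A).

Lemma separable_expand {f} (u : forall k, A k -> R) a0 :
  (forall a, f a = \sum_k u k (a k)) ->
  forall a, f a = f a0 + \sum_k (f (dfwith a0 (a k)) - f a0).
Proof.
move=> fE a.
have diffE k : f (dfwith a0 (a k)) - f a0 = u k (a k) - u k (a0 k).
  rewrite !fE (bigD1 k) //= [X in _ - X](bigD1 k) //= dfwith_in.
  rewrite (eq_bigr (fun l => u l (a0 l))) => [|l lk]; last by rewrite dfwith_out // eq_sym.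
  by rewrite opprD addrACA subrr addr0.
by rewrite (eq_bigr _ (fun k _ => diffE k)) sumrB !fE addrC subrK.
Qed.

Definition star_decomposable (e : rel 'I_n) f :=
  forall m, exists g : forall j, A m -> A j -> R,
    forall a, f a = \sum_(j in nbrs e m) g j (a m) (a j).

Lemma star_diff_local {e f i} (y : A i) {m} a b :
  star_decomposable e f -> m != i -> a m = b m -> a i = b i ->
  f a - f (dfwith a y) = f b - f (dfwith b y).
Proof.
move=> /(_ m)[g fE] mi abm abi; rewrite !fE !dfwith_out 1?eq_sym // -!sumrB.
apply: eq_bigr => j _; rewrite abm.
case: (eqVneq i j) => [<-|ij]; first by rewrite !dfwith_in abi.
by rewrite !dfwith_out // !subrr.
Qed.

Lemma star_peel {e f} a0 {i i1 i2} a :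
  star_decomposable e f -> i1 != i -> i2 != i -> i1 != i2 ->
  f a = f (dfwith a (a0 i)) + (f (dfwith a0 (a i)) - f a0).
Proof.
move=> fs i1i i2i i12.
have {3}-> : a0 = dfwith (dfwith a0 (a i)) (a0 i) by rewrite dfwith_dfwith dfwith_id.
rewrite (star_diff_local (a0 i) (dfwith a0 (a i)) (dfwith a (a0 i1)) fs i1i); last 2 first.
- by rewrite dfwith_in dfwith_out // eq_sym.
- by rewrite dfwith_in dfwith_out.
rewrite (star_diff_local (a0 i) _ a fs i2i); last 2 first.
- by rewrite dfwith_out.
- by rewrite dfwith_out // eq_sym.
by rewrite addrC subrK.
Qed.

Lemma star_decomposable_expand {e f} a0 : (2 < n)%N -> star_decomposable e f ->
  forall a, f a = f a0 + \sum_k (f (dfwith a0 (a k)) - f a0).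
Proof.
move=> n_gt2 fs; have n_gt1 : (1 < n)%N := ltnW n_gt2.
pose i := Ordinal (ltnW n_gt1); pose i1 := Ordinal n_gt1; pose i2 := Ordinal n_gt2.
have [g fE] := fs i.
pose u k (x : A k) := (if k \in nbrs e i then g k (a0 i) x else 0) +
                      (if k == i then f (dfwith a0 x) - f a0 else 0).
apply: (separable_expand u) => a.
rewrite big_split /= -!big_mkcond /= big_pred1_eq.
by rewrite (@star_peel e f a0 i i1 i2 a fs) // fE dfwith_in (sum_nbrs_dfwith (fun j => g j (a0 i))).
Qed.

Lemma star_decomposable_dfwith_notNC {e f} a0 {k} (x : A k) :
  symmetric e -> k \notin NC e -> star_decomposable e f -> f (dfwith a0 x) = f a0.
Proof.
move=> e_sym; rewrite inE => /forallPn[m]; rewrite negb_imply => /andP[mk nekm].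
move=> /(_ m)[g fE]; rewrite !fE dfwith_out 1?eq_sym //.
apply: eq_bigr => j; rewrite inE => /andP[_ emj]; rewrite dfwith_out //.
by apply: contraNneq nekm => kj; rewrite e_sym kj.
Qed.

Lemma star_decomposable_NC_expand {e f} a0 :
  symmetric e -> (2 < n)%N -> star_decomposable e f ->
  forall a, f a = f a0 + \sum_(k in NC e) (f (dfwith a0 (a k)) - f a0).
Proof.
move=> e_sym n_gt2 fs a.
rewrite (star_decomposable_expand a0 n_gt2 fs) (bigID (mem (NC e))) /=.
rewrite [X in _ + (_ + X)]big1 ?addr0 // => k kNC.
by rewrite (star_decomposable_dfwith_notNC a0 (a k) e_sym kNC fs) subrr.
Qed.

End Separable.

Lemma sum_if_eq {R : nmodType} {I : finType} {T : {set I}} t0 (x : R) :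
  t0 \in T -> \sum_(j in T) (if j == t0 then x else 0) = x.
Proof.
by move=> t0T; rewrite (big_setD1 t0) //= eqxx big1 ?addr0 // => j /setD1P[/negbTE->].
Qed.

Section NonnegShift.
Context {R : realDomainType} {n : nat} {A : 'I_n -> finType}.
Implicit Types (T : {set 'I_n}) (c : R) (u : forall j, A j -> R).

Definition argmin_profile u (a0 : joint A) : joint A := fun j => [arg min_(y < a0 j) u j y]%O.

(* Each summand is lowered to its minimum and t0 receives c plus the sum of these minima,
   which is non-negative whenever c + sum_T u is. *)
Definition nonneg_shift T (t0 : 'I_n) c u (a0 : joint A) j (y : A j) : R :=
  u j y - u j (argmin_profile u a0 j) +
  (if j == t0 then c + \sum_(l in T) u l (argmin_profile u a0 l) else 0).

Lemma nonneg_shift_ge0 T (t0 : 'I_n) c u (a0 : joint A) :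
  (forall a : joint A, 0 <= c + \sum_(j in T) u j (a j)) ->
  forall j y, 0 <= nonneg_shift T t0 c u a0 j y.
Proof.
move=> sum_ge0 j y; rewrite /nonneg_shift addr_ge0 //; last by case: ifP.
by rewrite subr_ge0 /argmin_profile; case: arg_minP => // z _; apply.
Qed.

Lemma sum_nonneg_shift T (t0 : 'I_n) c u (a0 a : joint A) : t0 \in T ->
  \sum_(j in T) nonneg_shift T t0 c u a0 j (a j) = c + \sum_(j in T) u j (a j).
Proof. by move=> t0T; rewrite big_split /= sum_if_eq // sumrB addrCA addrNK. Qed.

End NonnegShift.

Section Graph.
Context {n : nat} (e : rel 'I_n).

Lemma nbrs_exists : simple_connected_graph e -> (1 < n)%N ->
  forall i, exists j, j \in nbrs e i.
Proof.
case=> _ e_irr e_conn n_gt1 i.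
have /set0Pn[j] : [set~ i] != set0.
  by rewrite -card_gt0 cardsC1 card_ord -subn1 subn_gt0.
rewrite !inE => ji.
case/connectP: (e_conn i j) => [[|y p]] /=; first by move=> _ jE; rewrite jE eqxx in ji.
case/andP=> eiy _ _; exists y; rewrite inE eiy andbT.
by apply: contraTneq eiy => ->; rewrite e_irr.
Qed.

Lemma NC_nbrs {i k} : symmetric e -> k \in NC e -> k != i -> k \in nbrs e i.
Proof.
by move=> e_sym; rewrite !inE => /forallP/(_ i)/implyP kNC ki; rewrite ki e_sym kNC // eq_sym.
Qed.

Lemma sum_NC_nbrs {R : nmodType} (h : 'I_n -> R) i : symmetric e ->
  \sum_(k in NC e) h k =
  (if i \in NC e then h i else 0) + \sum_(j in nbrs e i | j \in NC e) h j.
Proof.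
move=> e_sym.
have -> : \sum_(j in nbrs e i | j \in NC e) h j = \sum_(k in NC e | k != i) h k.
  apply: eq_bigl => k; rewrite andbC; case: (boolP (k \in NC e)) => //= kNC.
  by apply/idP/idP => [|/(NC_nbrs e_sym kNC)//]; rewrite inE => /andP[].
case: ifPn => [iNC|iNNC]; first exact: bigD1.
rewrite add0r; apply: eq_bigl => k.
by case: (eqVneq k i) => [->|]; rewrite ?andbT ?andbF ?(negbTE iNNC).
Qed.

End Graph.

Lemma ord2_other {i j k : 'I_2} : j != i -> k != i -> j = k.
Proof.
move=> ji ki; apply/val_inj; move: ji ki (ltn_ord i) (ltn_ord j) (ltn_ord k).
by rewrite -!val_eqE /=; lia.
Qed.

Lemma nbrs_ord2 (e : rel 'I_2) i : simple_connected_graph e -> nbrs e i = [set~ i].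
Proof.
move=> e_g; apply/setP => j; rewrite !inE; case: (eqVneq j i) => //= ji.
have [y] := nbrs_exists e e_g isT i; rewrite inE => /andP[yi eiy].
by rewrite -(ord2_other yi ji).
Qed.

Lemma dfwith_ord2 {A : 'I_2 -> finType} (a0 a : joint A) i j : j != i ->
  dfwith (dfwith a0 (a i)) (a j) = a.
Proof.
move=> ji; apply: functional_extensionality_dep => k.
case: (eqVneq j k) => [<-|jk]; first by rewrite dfwith_in.
rewrite dfwith_out //; case: (eqVneq k i) => [->|ki]; first by rewrite dfwith_in.
by rewrite (ord2_other ji ki) eqxx in jk.
Qed.

Section NetworkedGames.
Context {R : realType} {n : nat} {S : finType} {A : 'I_n -> finType}.
Variables (e : rel 'I_n) (P : S -> joint A -> S -> R) (r : 'I_n -> S -> joint A -> R).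
Variable gamma : R.

Lemma QV0 i s a : QV P r gamma (fun _ => 0) i s a = r i s a.
Proof. by rewrite /QV big1 ?mulr0 ?addr0 // => s' _; rewrite mulr0. Qed.

Lemma QV_indicator s' i s a :
  QV P r gamma (fun x => (x == s')%:R) i s a = r i s a + gamma * P s a s'.
Proof.
rewrite /QV (bigD1 s') //= eqxx mulr1 big1 ?addr0 // => x /negbTE->.
by rewrite mulr0.
Qed.

Lemma NMG_kernel_star_decomposable : gamma != 0 -> is_NMG e P r gamma ->
  forall s s', star_decomposable e (fun a => P s a s').
Proof.
move=> gamma_neq0 NMG s s' m.
have [q0 q0E] := NMG (fun _ => 0); have [q1 q1E] := NMG (fun x => (x == s')%:R).
exists (fun j x y => (q1 m j s x y - q0 m j s x y) / gamma) => a.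
rewrite -mulr_suml sumrB -q1E -q0E QV0 QV_indicator addrC addKr.
by rewrite mulrAC divff // mul1r.
Qed.

Lemma cond1_of_decomposes q (a0 : joint A) :
  simple_connected_graph e -> (1 < n)%N -> (forall i s a, 0 <= r i s a) ->
  decomposes e r q -> cond1 e r.
Proof.
move=> e_g n_gt1 r_ge0 rE; have [nbr nbrP] := choice (nbrs_exists e e_g n_gt1).
have sum_ge0 i s (x : A i) (b : joint A) :
    0 <= 0 + \sum_(j in nbrs e i) q i j s x (b j).
  have := r_ge0 i s (dfwith b x).
  by rewrite rE dfwith_in (sum_nbrs_dfwith (fun j => q i j s x)) add0r.
exists (fun i j s x => nonneg_shift (nbrs e i) (nbr i) 0 (fun j => q i j s x) a0 j).
split=> [i j s x y _ | i s a]; first exact: nonneg_shift_ge0.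
by rewrite rE sum_nonneg_shift ?add0r.
Qed.

Lemma cond2_of_star_decomposable (a0 : joint A) :
  symmetric e -> (2 < n)%N -> (forall s a s', 0 <= P s a s') ->
  (forall s s', star_decomposable e (fun a => P s a s')) -> cond2 e P.
Proof.
move=> e_sym n_gt2 P_ge0 P_star s s'.
have PE := star_decomposable_NC_expand a0 e_sym n_gt2 (P_star s s').
split=> [/set0Pn[t0 t0NC] | NC0]; last first.
  by exists (P s a0 s'); split=> // a; rewrite PE NC0 big_set0 addr0.
pose u k (x : A k) := P s (dfwith a0 x) s' - P s a0 s'.
exists (nonneg_shift (NC e) t0 (P s a0 s') u a0); split=> [i x _ | a].
  by apply: nonneg_shift_ge0 => a; rewrite -PE.
by rewrite sum_nonneg_shift // -PE.
Qed.

Lemma cond2_NC_separable : cond2 e P -> forall s s',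
  exists (F : forall k, A k -> R) (c : R),
    forall a, P s a s' = c + \sum_(k in NC e) F k (a k).
Proof.
move=> P2 s s'; have [P2F P2c] := P2 s s'.
case: (eqVneq (NC e) set0) => [NC0 | /P2F[F [_ FE]]]; last first.
  by exists F, 0 => a; rewrite add0r.
have [c [_ cE]] := P2c NC0.
by exists (fun _ _ => 0), c => a; rewrite NC0 big_set0 addr0.
Qed.

(* A term in a_k with k in N_C goes to the edge (i, k); the constant and a term in a_i
   go to an arbitrary edge of i. *)
Lemma decomposes_NC_separable (c : S -> R) (h : S -> forall k, A k -> R) :
  simple_connected_graph e -> (1 < n)%N ->
  exists q, decomposes e (fun _ s a => c s + \sum_(k in NC e) h s k (a k)) q.
Proof.
move=> e_g n_gt1; have [nbr nbrP] := choice (nbrs_exists e e_g n_gt1).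
have e_sym : symmetric e by case: e_g.
exists (fun i j s (x : A i) (y : A j) => (if j \in NC e then h s j y else 0) +
  (if j == nbr i then c s + (if i \in NC e then h s i x else 0) else 0)).
move=> i s a; rewrite big_split /= -big_mkcondr sum_if_eq //.
by rewrite (sum_NC_nbrs e _ i e_sym) addrA addrC.
Qed.

Lemma NMG_of_cond12 : simple_connected_graph e -> (1 < n)%N ->
  cond1 e r -> cond2 e P -> is_NMG e P r gamma.
Proof.
move=> e_g n_gt1 [rij [_ rE]] P2 V.
have /choice[Fc FcE] : forall ss : S * S, exists Fc : (forall k, A k -> R) * R,
    forall a, P ss.1 a ss.2 = Fc.2 + \sum_(k in NC e) Fc.1 k (a k).
  by move=> [s s']; have [F [c FE]] := cond2_NC_separable P2 s s'; exists (F, c).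
pose c s := gamma * \sum_(s' : S) (Fc (s, s')).2 * V s'.
pose h s k (x : A k) := gamma * \sum_(s' : S) (Fc (s, s')).1 k x * V s'.
have [q qE] := decomposes_NC_separable c h e_g n_gt1.
exists (fun i j s x y => rij i j s x y + q i j s x y) => i s a.
rewrite big_split /= -rE -qE /QV /c /h; congr (_ + _).
rewrite -mulr_sumr -mulrDr exchange_big -big_split /=; congr (_ * _).
by apply: eq_bigr => s' _; rewrite (FcE (s, s')) mulrDl mulr_suml.
Qed.

Lemma zero_sum_NMG_rewards0 : (forall i s a, 0 <= r i s a) ->
  is_zero_sum_NMG e P r gamma -> forall i s a, r i s a = 0.
Proof.
move=> r_ge0 [_ [q [qE q0]]] i s a.
have : \sum_(i < n) r i s a = 0.
  by rewrite -[RHS](q0 s a); apply: eq_bigr => j _; rewrite -qE QV0.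
by move/psumr_eq0P; apply.
Qed.

Lemma zero_sum_NMG_iff : (forall i s a, 0 <= r i s a) ->
  (is_NMG e P r gamma <-> cond1 e r /\ cond2 e P) ->
  (is_zero_sum_NMG e P r gamma <-> [/\ cond1 e r, cond2 e P & cond1_zero_sum e r]).
Proof.
move=> r_ge0 NMG_equiv; split=> [zsNMG | [r1 P2 [rij [[_ rE] rij0]]]].
  have [r1 P2] := NMG_equiv.1 zsNMG.1; split=> //.
  have r0 := zero_sum_NMG_rewards0 r_ge0 zsNMG.
  exists (fun _ _ _ _ _ => 0); split; first split=> [*|i s a]; first exact: lexx.
    by rewrite r0 big1.
  by move=> s a; rewrite big1 // => i _; rewrite big1.
split; first exact/NMG_equiv.
by exists rij; split=> // i s a; rewrite QV0 rE.
Qed.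

Lemma NMG_iff (a0 : joint A) {Rmax : R} : (2 < n)%N -> simple_connected_graph e ->
  is_markov_game P r Rmax gamma -> (is_NMG e P r gamma <-> cond1 e r /\ cond2 e P).
Proof.
move=> n_gt2 e_g [/andP[gamma_gt0 _] P_ge0 _ r_bounded].
have n_gt1 : (1 < n)%N := ltnW n_gt2.
have r_ge0 i s a : 0 <= r i s a by case/andP: (r_bounded i s a).
split=> [NMG | [r1 P2]]; last exact: NMG_of_cond12.
have [q0 q0E] := NMG (fun _ => 0).
split.
  by apply: (cond1_of_decomposes q0 a0) => // i s a; rewrite -(QV0 i) q0E.
apply: (cond2_of_star_decomposable a0) => //; first by case: e_g.
exact: (NMG_kernel_star_decomposable (lt0r_neq0 gamma_gt0) NMG).
Qed.

Lemma empty_joint_all : (joint A -> False) ->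
  [/\ is_NMG e P r gamma, is_zero_sum_NMG e P r gamma, cond1 e r, cond2 e P &
      cond1_zero_sum e r].
Proof.
move=> no_joint; pose q0 : forall i j : 'I_n, S -> A i -> A j -> R := fun _ _ _ _ _ => 0.
have q0E (Q : 'I_n -> S -> joint A -> R) : decomposes e Q q0.
  by move=> i s a; case: (no_joint a).
have q0_zs : network_zero_sum e q0 by move=> s a; case: (no_joint a).
have r_q0 : reward_decomp_witness e r q0 by split=> // *; exact: lexx.
have NMG : is_NMG e P r gamma by move=> V; exists q0.
split; [exact: NMG | by split=> //; exists q0 | by exists q0 | | by exists q0].
move=> s s'; split=> _.
  by exists (fun _ _ => 0); split=> [*|a]; [exact: lexx | case: (no_joint a)].
by exists 0; split=> // a; case: (no_joint a).
Qed.

End NetworkedGames.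

Section TwoPlayers.
Context {R : realType} {S : finType} {A : 'I_2 -> finType}.
Variables (e : rel 'I_2) (P : S -> joint A -> S -> R) (r : 'I_2 -> S -> joint A -> R).
Variable gamma : R.

Lemma decomposes_ord2 (Q : 'I_2 -> S -> joint A -> R) (a0 : joint A) :
  simple_connected_graph e ->
  decomposes e Q (fun i j s x y => Q i s (dfwith (dfwith a0 x) y)).
Proof.
move=> e_g i s a; rewrite nbrs_ord2 // (eq_bigr (fun _ => Q i s a)) => [|j].
  by rewrite sumr_const cardsC1 card_ord.
by rewrite !inE => ji; rewrite dfwith_ord2.
Qed.

Lemma two_player_NMG (a0 : joint A) : simple_connected_graph e ->
  is_NMG e P r gamma /\ (zero_sum_mg r -> is_zero_sum_NMG e P r gamma).
Proof.
move=> e_g; have NMG : is_NMG e P r gamma.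
  by move=> V; eexists; exact: decomposes_ord2 a0 e_g.
split=> // r_zs; split=> //; eexists; split; first exact: decomposes_ord2 a0 e_g.
move=> s a; rewrite -[RHS](r_zs s a); apply: eq_bigr => i _.
by rewrite -(decomposes_ord2 _ a0 e_g i s a) QV0.
Qed.

End TwoPlayers.

Theorem proposition1 (R : realType) :
  (forall (n : nat) (S : finType) (A : 'I_n -> finType) (e : rel 'I_n)
          (P : S -> joint A -> S -> R) (r : 'I_n -> S -> joint A -> R)
          (Rmax gamma : R),
     (2 < n)%N ->
     simple_connected_graph e ->
     is_markov_game P r Rmax gamma ->
     (is_NMG e P r gamma <-> cond1 e r /\ cond2 e P) /\
     (is_zero_sum_NMG e P r gamma <-> [/\ cond1 e r, cond2 e P & cond1_zero_sum e r]))
  /\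
  (forall (S : finType) (A : 'I_2 -> finType) (e : rel 'I_2)
          (P : S -> joint A -> S -> R) (r : 'I_2 -> S -> joint A -> R)
          (Rmax gamma : R),
     simple_connected_graph e ->
     is_markov_game P r Rmax gamma ->
     is_NMG e P r gamma /\ (zero_sum_mg r -> is_zero_sum_NMG e P r gamma)).
Proof.
split=> [n S A e P r Rmax gamma n_gt2 e_g mg | S A e P r Rmax gamma e_g _].
  have r_ge0 i s a : 0 <= r i s a by case: mg => _ _ _ /(_ i s a)/andP[].
  case: (pselectT (joint A)) => [no_joint | a0].
    by case: (empty_joint_all e P r gamma no_joint).
  have NMG_equiv := NMG_iff e P r gamma a0 n_gt2 e_g mg.
  by split; last exact: zero_sum_NMG_iff.
case: (pselectT (joint A)) => [no_joint | a0]; last exact: two_player_NMG.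
by case: (empty_joint_all e P r gamma no_joint).
Qed.
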